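(* Let $r\ge 2$ and let $K$ be a basic $r$-hole. Then: (1) $K$ is $(r-1)$-path connected; (2) $d_K(F)\ge 2$ for every $(r-1)$-face $F$ of $K$; (3) for every $r$-face $\bar F$ of $K$, the complex $K-\bar F$ is $(r-1)$-path connected.
   Context: A (finite abstract) simplicial complex $K$ on a finite vertex set $V(K)$ is a family of subsets of $V(K)$ closed under taking subsets and containing every singleton; an $i$-face is a member of cardinality $i+1$; $S_i(K)$ is the set of $i$-faces; facets are inclusion-maximal faces; $K$ is pure if all facets have the same dimension. For an $i$-face $F$, $d_K(F)$ is the number of $(i+1)$-faces of $K$ containing $F$. Two distinct $i$-faces are up-neighbors if their union is an $(i+1)$-face of $K$. $K$ is $i$-path connected if for any two $i$-faces $F,G$ of $K$ there is a sequence $F=F_1,F_2,\dots,F_m=G$ of $i$-faces in which consecutive terms are up-neighbors. $\beta_r(K)=\dim_{\mathbb R}H_r(K;\mathbb R)$ is the $r$-th Betti number (simplicial homology with real coefficients). A basic $r$-hole is a pure $r$-dimensional complex $K$ with $\beta_r(K)=1$ such that for every $r$-face $\bar F$, the complex $K-\bar F$ obtained by deleting only the face $\bar F$ (keeping all its proper subsets) satisfies $\beta_r(K-\bar F)=0$. *)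

From HB Require Import structures.
From mathcomp Require Import all_boot all_order all_algebra.
From mathcomp Require Import reals.
Set Implicit Arguments. Unset Strict Implicit. Unset Printing Implicit Defensive.
Import Order.TTheory GRing.Theory Num.Theory.

Section Complexes.
Variable V : finType.
Implicit Types (K : {set {set V}}) (F G : {set V}).

Definition is_complex K : Prop :=
  (forall F G, F \in K -> G \subset F -> G \in K) /\ (forall v : V, [set v] \in K).

Definition faces (i : nat) K : {set {set V}} := [set F in K | #|F| == i.+1].

Definition facet K F : Prop :=
  F \in K /\ forall G, G \in K -> F \subset G -> G = F.

Definition pure_dim (r : nat) K : Prop := forall F, facet K F -> #|F| = r.+1.

Definition degK K F : nat := #|[set G in K | (F \subset G) && (#|G| == #|F|.+1)]|.

Definition upnb (i : nat) K : rel {set V} := fun F G =>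
  [&& F \in faces i K, G \in faces i K, F != G & (F :|: G) \in faces i.+1 K].

Definition path_connected (i : nat) K : Prop :=
  forall F G, F \in faces i K -> G \in faces i K ->
    exists s : seq {set V}, path (upnb i K) F s /\ last F s = G.

(* Real simplicial homology. Chains are row vectors indexed by all subsets of V
   (via enum_rank); the vertices are ordered by enum_rank, which fixes orientations. *)
Variable R : realType.
Local Open Scope ring_scope.

Definition nsets := #|{: {set V}}|.

(* boundary of the i-face F on the (i-1)-face G = F \ {v}: (-1)^(position of v in F) *)
Definition bsign F G : R :=
  if [pick v in F :\: G] is Some v then
    (-1) ^+ #|[set u in F | (enum_rank u < enum_rank v)%N]|
  else 0.

(* matrix of the boundary map d_i : C_i -> C_{i-1}; d_0 = 0 (unreduced homology) *)
Definition bdry (i : nat) K : 'M[R]_nsets :=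
  \matrix_(a, b)
    (let F : {set V} := enum_val (a : 'I_#|{: {set V}}|) in
     let G : {set V} := enum_val (b : 'I_#|{: {set V}}|) in
     if [&& (0 < i)%N, F \in faces i K, G \subset F & #|G| == i]
     then bsign F G else 0).

Definition chains (i : nat) K : 'M[R]_nsets :=
  \matrix_(a, b) ((a == b) && ((enum_val (a : 'I_#|{: {set V}}|) : {set V}) \in faces i K))%:R.

Definition cycles (i : nat) K : 'M[R]_nsets := (chains i K :&: kermx (bdry i K))%MS.
Definition boundaries (i : nat) K : 'M[R]_nsets := bdry i.+1 K.

(* beta_i(K) = dim Z_i - dim B_i = dim H_i(K; R) *)
Definition betti (i : nat) K : nat := (\rank (cycles i K) - \rank (boundaries i K))%N.

Definition basic_hole (r : nat) K : Prop :=
  [/\ is_complex K, pure_dim r K, betti r K = 1%N &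
      forall Fb, Fb \in faces r K -> betti r (K :\ Fb) = 0%N].

End Complexes.

From HB Require Import structures.
From mathcomp Require Import all_boot all_order all_algebra.
From mathcomp Require Import reals.
Set Implicit Arguments. Unset Strict Implicit. Unset Printing Implicit Defensive.
Import Order.TTheory GRing.Theory Num.Theory.

(* A basic r-hole carries a nonzero r-cycle z which does not vanish on any
   r-face Fb, since otherwise z would be a nonzero r-cycle of K - Fb.  If an
   (r-1)-face F had a single coface G, the coefficient of F in the boundary of
   z would be +-z_G <> 0; hence d_K(F) >= 2.
   Restricting z to the r-faces above an up-component C of (r-1)-faces again
   gives a cycle, since every (r-1)-face of such an r-face lies in C; being
   nonzero above F, it vanishes nowhere, so C contains every (r-1)-face.  In K - Fb the boundary of
   the same restriction of z is -z_Fb times the part of the boundary of Fb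
   lying in C.  It is nonzero, for otherwise the restriction would be a cycle
   of K vanishing at Fb but not at a second coface of F; so C contains some
   Fb \ a, and the vanishing of the double boundary at Fb \ {a, b} then puts
   every Fb \ b into C.  Thus any two (r-1)-faces of K - Fb are joined through
   the boundary of Fb. *)

Section BasicHoles.
Variables (V : finType) (R : realType).
Local Open Scope ring_scope.
Local Notation n := (nsets V).
Local Notation ev := (@enum_val {set V} (mem {: {set V}})).
Local Notation rk := (@enum_rank {set V}).
Implicit Types (K L : {set {set V}}) (S X Y F G H : {set V}) (c z d : 'rV[R]_n) (u w : V).

Lemma rkK S : ev (rk S) = S. Proof. exact: enum_rankK. Qed.
Lemma evK (m : 'I_n) : rk (ev m) = m. Proof. exact: enum_valK. Qed.

Definition down_closed K := forall F G, F \in K -> G \subset F -> G \in K.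

Lemma facesE i K S : (S \in faces i K) = (S \in K) && (#|S| == i.+1).
Proof. by rewrite inE. Qed.

Lemma facesP i K S : reflect (S \in K /\ #|S| = i.+1) (S \in faces i K).
Proof. by rewrite facesE; apply: (iffP andP) => -[-> /eqP]. Qed.

Lemma faces_delete i K Fb : faces i (K :\ Fb) = faces i K :\ Fb.
Proof. by apply/setP => S; rewrite !inE andbA. Qed.

Lemma subset_cardS_setD1 X S : X \subset S -> #|X|.+1 = #|S| ->
  exists2 a, a \in S & X = S :\ a.
Proof.
move=> XS cX; have /cards1P [a Da] : #|S :\: X| == 1%N.
  by rewrite cardsD (setIidPr XS) -cX subSnn.
have /setDP [aS _] : a \in S :\: X by rewrite Da set11.
by exists a; rewrite // -Da setDDr setDv set0U (setIidPr XS).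
Qed.

Lemma setD1_cover S u w X : X \subset S -> #|X|.+1 = #|S| ->
  S :\ u :\ w \subset X -> X = S :\ u \/ X = S :\ w.
Proof.
move=> XS cX sub; have [y yS eX] := subset_cardS_setD1 XS cX.
have [<-|yu] := eqVneq y u; first by left.
have [<-|yw] := eqVneq y w; first by right.
have /(subsetP sub) : y \in S :\ u :\ w by rewrite !inE yw yu yS.
by rewrite eX !inE eqxx.
Qed.

Lemma card_setD1 S (x : V) : x \in S -> #|S :\ x| = #|S|.-1.
Proof. by move=> xS; rewrite (cardsD1 x S) xS. Qed.

Lemma setD1C S u w : S :\ u :\ w = S :\ w :\ u.
Proof. by rewrite !setDDl setUC. Qed.

Lemma setU_codim1 i X Y S : X \subset S -> Y \subset S -> #|X| = i.+1 ->
  #|Y| = i.+1 -> #|S| = i.+2 -> X != Y -> X :|: Y = S.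
Proof.
move=> XS YS cX cY cS XY; apply/eqP; rewrite eqEcard subUset XS YS cS /=.
have YX : ~~ (Y \subset X) by apply: contra XY => YX; rewrite eq_sym eqEcard YX cX cY /=.
by rewrite -cX; apply: proper_card; apply: properUl.
Qed.

Lemma upnb_sym i K : symmetric (upnb i K).
Proof. by move=> X Y; rewrite /upnb andbCA eq_sym setUC. Qed.

Lemma connect_upnb_sub i K X Y S : X \in faces i K -> Y \in faces i K ->
  S \in faces i.+1 K -> X \subset S -> Y \subset S -> connect (upnb i K) X Y.
Proof.
move=> Xf Yf Sf XS YS; have [->|XY] := eqVneq X Y; first exact: connect0.
apply: connect1; rewrite /upnb Xf Yf XY /=.
case/facesP: Xf => _ cX; case/facesP: Yf => _ cY; case/facesP: (Sf) => _ cS.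
by rewrite (setU_codim1 XS YS cX cY cS XY).
Qed.

Lemma connect_path_connected i K :
  (forall F G, F \in faces i K -> G \in faces i K -> connect (upnb i K) F G) ->
  path_connected i K.
Proof. by move=> cK F G Ff Gf; case/connectP: (cK F G Ff Gf) => s sp ->; exists s. Qed.

Lemma face_sub_facet K S : S \in K -> exists2 G, facet K G & S \subset G.
Proof.
pose P G := (G \in K) && (S \subset G).
move=> SK; have PS : P S by rewrite /P SK subxx.
have [G /andP [GK SG] Gmax] := arg_maxnP (fun G => #|G|) PS.
exists G => //; split => // G' G'K GG'.
apply/esym/eqP; rewrite eqEcard GG' /=; apply: Gmax.
by rewrite /P G'K (subset_trans SG GG').
Qed.

Lemma pure_card r K S : pure_dim r K -> S \in K -> (#|S| <= r.+1)%N.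
Proof. by move=> pK /face_sub_facet [G /pK <-]; apply: subset_leq_card. Qed.

Lemma pure_sub_top r K S : pure_dim r K -> S \in K ->
  exists2 G, G \in faces r K & S \subset G.
Proof.
move=> pK /face_sub_facet [G fG SG]; exists G => //.
by rewrite facesE (pK _ fG) eqxx andbT; case: fG.
Qed.

Lemma pure_faces_gt r K : pure_dim r K -> faces r.+1 K = set0.
Proof.
move=> pK; apply/setP => S; rewrite facesE inE.
by apply/negbTE/andP => -[SK /eqP cS]; have := pure_card pK SK; rewrite cS ltnn.
Qed.

Lemma pure_top_max r K Fb G : pure_dim r K -> Fb \in faces r K ->
  G \in K -> Fb \subset G -> G = Fb.
Proof.
move=> pK /facesP [_ cFb] GK FbG.
by apply/esym/eqP; rewrite eqEcard FbG cFb (pure_card pK).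
Qed.

Lemma down_closed_delete r K Fb : down_closed K -> pure_dim r K ->
  Fb \in faces r K -> down_closed (K :\ Fb).
Proof.
move=> dK pK Fbf S X /setD1P [SFb SK] XS; rewrite in_setD1 (dK S) // andbT.
by apply: contra_neq SFb => eX; apply: (pure_top_max pK Fbf SK); rewrite -eX.
Qed.

Lemma bdryE i K a b : bdry R i K a b =
  if [&& (0 < i)%N, ev a \in faces i K, ev b \subset ev a & #|ev b| == i]
  then bsign R (ev a) (ev b) else 0.
Proof. by rewrite mxE. Qed.

Lemma bsign_neq0 S X : ~~ (S \subset X) -> bsign R S X != 0.
Proof.
rewrite -setD_eq0 /bsign => /set0Pn [x xSX].
by case: pickP => [v _|/(_ x)]; rewrite ?signr_eq0 ?xSX.
Qed.

Lemma bdry_neq0 i K a b : (0 < i)%N ->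
  (bdry R i K a b != 0) = [&& ev a \in faces i K, ev b \subset ev a & #|ev b| == i].
Proof.
move=> i0; rewrite bdryE i0 /=; case: and3P => [[af _ /eqP cb]|_]; last by rewrite eqxx.
apply: bsign_neq0; apply: contraTN af => /subset_leq_card.
by rewrite facesE cb => le; apply/nandP; right; rewrite neq_ltn ltnS le.
Qed.

Lemma bdry_faces0 i K : faces i K = set0 -> bdry R i K = 0.
Proof. by move=> e; apply/matrixP => a b; rewrite bdryE e inE andbF mxE. Qed.

Lemma bdry_delete i K Fb a b :
  bdry R i (K :\ Fb) a b = if ev a == Fb then 0 else bdry R i K a b.
Proof.
rewrite !bdryE faces_delete in_setD1.
by case: (eqVneq (ev a) Fb) => [->|_]; rewrite ?eqxx ?andbF.
Qed.

Lemma mulmx_bdry_delete i K Fb c b : (c *m bdry R i (K :\ Fb)) 0 b =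
  (c *m bdry R i K) 0 b - c 0 (rk Fb) * bdry R i K (rk Fb) b.
Proof.
rewrite [LHS]mxE [X in X - _]mxE (bigD1 (rk Fb)) // [X in X - _](bigD1 (rk Fb)) //=.
rewrite addrAC subrr add0r bdry_delete rkK eqxx mulr0 add0r; apply: eq_bigr => a aFb.
by rewrite bdry_delete -(inj_eq enum_rank_inj) evK (negbTE aFb).
Qed.

Lemma chainsP i K c :
  reflect (forall m, ev m \notin faces i K -> c 0 m = 0) (c <= chains R i K)%MS.
Proof.
apply: (iffP idP) => [/submxP [D ->] m nm|Hc].
  rewrite mxE big1 // => j _; rewrite mxE /=.
  by case: eqP => [->|] /=; rewrite ?(negbTE nm) mulr0.
apply/submxP; exists c; apply/rowP => m.
rewrite mxE (bigD1 m) //= big1 => [|j /negbTE ne]; last by rewrite mxE ne mulr0.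
rewrite mxE eqxx addr0; case: (boolP (ev m \in faces i K)) => fm.
  by rewrite mulr1.
by rewrite Hc // mul0r.
Qed.

Lemma cyclesP i K c : reflect ((c <= chains R i K)%MS /\ c *m bdry R i K = 0)
  (c <= cycles R i K)%MS.
Proof. by rewrite sub_capmx sub_kermx; apply: (iffP andP) => -[-> /eqP]. Qed.

Lemma cycles_delete i K Fb c : (c <= cycles R i K)%MS -> c 0 (rk Fb) = 0 ->
  (c <= cycles R i (K :\ Fb))%MS.
Proof.
case/cyclesP => /chainsP cK cb cFb; apply/cyclesP; split.
  apply/chainsP => m; rewrite faces_delete in_setD1 negb_and negbK.
  by case/orP => [/eqP eFb|/cK //]; rewrite -(evK m) eFb.
by apply/rowP => b; rewrite mulmx_bdry_delete cb cFb mul0r !mxE subr0.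
Qed.

Definition restr c (T : {set {set V}}) : 'rV[R]_n :=
  \row_m (if ev m \in T then c 0 m else 0).

Lemma restrE c T S : restr c T 0 (rk S) = if S \in T then c 0 (rk S) else 0.
Proof. by rewrite mxE rkK. Qed.

Lemma restr_chains i K c T :
  (c <= chains R i K)%MS -> (restr c T <= chains R i K)%MS.
Proof. by move/chainsP => cK; apply/chainsP => m /cK; rewrite mxE => ->; case: ifP. Qed.

Local Notation below x S := #|[set y in S | (enum_rank y < enum_rank x)%N]|.

Lemma bsign_setD1 S (x : V) : x \in S -> bsign R S (S :\ x) = (-1) ^+ below x S.
Proof.
move=> xS; rewrite /bsign; case: pickP => [v|/(_ x)]; last by rewrite !inE eqxx xS.
by rewrite !inE negb_and negbK => /andP [/orP [/eqP ->|/negP] //].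
Qed.

Lemma below_setD1 S u (x : V) :
  below x S = ((u \in S) && (enum_rank u < enum_rank x) + below x (S :\ u))%N.
Proof.
rewrite (cardsD1 u); congr (_ + _)%N; first by rewrite inE.
by apply: eq_card => y; rewrite !inE andbA.
Qed.

Lemma bsign_setD1_pair S u w : u \in S -> w \in S -> u != w ->
  bsign R S (S :\ u) * bsign R (S :\ u) (S :\ u :\ w) +
  bsign R S (S :\ w) * bsign R (S :\ w) (S :\ w :\ u) = 0.
Proof.
move=> uS wS uw; have wSu : w \in S :\ u by rewrite !inE eq_sym uw.
have uSw : u \in S :\ w by rewrite !inE uw.
rewrite !bsign_setD1 //; clear wSu uSw.
wlog lt_uw : u w uS wS uw / (enum_rank u < enum_rank w)%N.
  move=> hw; case: (ltngtP (enum_rank u) (enum_rank w)) => [l|l|/val_inj/enum_rank_inj e].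
  - exact: hw.
  - by rewrite addrC; apply: hw; rewrite // eq_sym.
  - by rewrite e eqxx in uw.
rewrite (below_setD1 S u w) uS lt_uw (below_setD1 S w u) wS ltnNge (ltnW lt_uw).
by rewrite add0n add1n exprS mulN1r mulNr [X in X - _]mulrC subrr.
Qed.

Lemma mul_bdry_term_neq0 i K p q m :
  bdry R i.+2 K p m * bdry R i.+1 K m q != 0 ->
  [/\ ev p \in faces i.+2 K, ev q \subset ev m, ev m \subset ev p,
      #|ev q| = i.+1 & #|ev m|.+1 = #|ev p|].
Proof.
rewrite mulf_eq0 negb_or !bdry_neq0 // => /andP [/and3P [pf mp /eqP cm] /and3P [_ qm /eqP cq]].
by split => //; case/facesP: pf => _ ->; rewrite cm.
Qed.

Lemma mul_bdry_bdry i K : down_closed K -> bdry R i.+2 K *m bdry R i.+1 K = 0.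
Proof.
move=> dK; apply/matrixP => p q; rewrite !mxE.
set S := ev p; set H := ev q.
case: (boolP [&& S \in faces i.+2 K, H \subset S & #|H| == i.+1]); last first.
  move=> nc; apply: big1 => m _; apply/eqP; apply: contraNT nc.
  by case/mul_bdry_term_neq0 => -> Hm mS -> _; rewrite (subset_trans Hm mS) eqxx.
case/and3P => Sf HS /eqP cH; case/facesP: (Sf) => SK cS.
have /cards2P [u [w [uw DSH]]] : #|S :\: H| == 2%N.
  by rewrite cardsD (setIidPr HS) cS cH subSS !subSn // subnn.
have /setDP [uS _] : u \in S :\: H by rewrite DSH !inE eqxx.
have /setDP [wS _] : w \in S :\: H by rewrite DSH !inE eqxx orbT.
have eH : H = S :\ u :\ w by rewrite setDDl -DSH setDDr setDv set0U (setIidPr HS).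
have cSx x : x \in S -> #|S :\ x| = i.+2 by move=> xS; rewrite card_setD1 // cS.
have Sxf x : x \in S -> S :\ x \in faces i.+1 K.
  by move=> xS; rewrite facesE (dK S) ?subD1set ?cSx //=.
have HSu : H \subset S :\ u by rewrite eH subD1set.
have HSw : H \subset S :\ w by rewrite eH setD1C subD1set.
have neq_uw : rk (S :\ w) != rk (S :\ u).
  rewrite (inj_eq enum_rank_inj); apply/eqP => /setP /(_ w).
  by rewrite !inE eqxx wS eq_sym (negbTE uw).
rewrite (bigD1 (rk (S :\ u))) // (bigD1 (rk (S :\ w))) //= big1 => [|m /andP [nu nw]].
  rewrite addr0 !bdryE !rkK -/S -/H /= Sf !Sxf // !subD1set HSu HSw !cSx // cH !eqxx /=.
  by rewrite eH [in X in _ + X]setD1C; apply: bsign_setD1_pair.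
apply/eqP; apply: contraNT nu => /mul_bdry_term_neq0 [_ Hm mS _ cm].
rewrite -/H eH in Hm; have [em|em] := setD1_cover mS cm Hm.
  by rewrite -(evK m) em eqxx.
by rewrite -(evK m) em eqxx in nw.
Qed.

Lemma betti_top r K : faces r.+1 K = set0 -> betti R r K = \rank (cycles R r K).
Proof. by move=> e; rewrite /betti /boundaries bdry_faces0 // mxrank0 subn0. Qed.

Lemma basic_hole_cycle_eq0 r K Fb c : basic_hole R r K -> Fb \in faces r K ->
  (c <= cycles R r K)%MS -> c 0 (rk Fb) = 0 -> c = 0.
Proof.
case=> _ pK _ hdel Fbf cC cFb.
have e0 : faces r.+1 (K :\ Fb) = set0 by rewrite faces_delete pure_faces_gt // set0D.
have /eqP := hdel Fb Fbf; rewrite betti_top // mxrank_eq0 => /eqP cyc0.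
by apply/eqP; rewrite -submx0 -cyc0 cycles_delete.
Qed.

Lemma basic_hole_full_cycle r K : basic_hole R r K ->
  exists2 z : 'rV[R]_n, (z <= cycles R r K)%MS & forall S, S \in faces r K -> z 0 (rk S) != 0.
Proof.
move=> hK; have [_ pK b1 _] := hK.
have : cycles R r K != 0 by rewrite -mxrank_eq0 -betti_top ?pure_faces_gt ?b1.
case/rowV0Pn => z zC z0; exists z => // S Sf.
by apply: contra_neq z0; apply: basic_hole_cycle_eq0 hK Sf zC.
Qed.

Lemma basic_hole_degK r K F : basic_hole R r.+1 K -> F \in faces r K ->
  (2 <= degK K F)%N.
Proof.
move=> hK Ff; have [_ pK _ _] := hK; have [z zC zS] := basic_hole_full_cycle hK.
case/facesP: (Ff) => FK cF.
have [G0 G0f FG0] := pure_sub_top pK FK.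
rewrite /degK; set D := [set G in K | _].
have memD G : (G \in D) = (G \in faces r.+1 K) && (F \subset G).
  by rewrite !inE cF; case: (G \in K); rewrite //= andbC.
rewrite ltnNge; apply/negP => D_le1.
have DG0 : D = [set G0].
  by apply/eqP; rewrite eq_sym eqEcard sub1set memD G0f FG0 cards1 D_le1.
have zF : \sum_a z 0 a * bdry R r.+1 K a (rk F) = 0.
  by case/cyclesP: zC => _ /rowP/(_ (rk F)); rewrite [LHS]mxE mxE.
have : z 0 (rk G0) * bdry R r.+1 K (rk G0) (rk F) = 0.
  rewrite -zF (bigD1 (rk G0)) //= big1 ?addr0 // => a aG0.
  apply/eqP; apply: contraTT aG0; rewrite mulf_eq0 negb_or bdry_neq0 // rkK negbK.
  case/andP => _ /and3P [af Fa _]; have : ev a \in D by rewrite memD af Fa.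
  by rewrite DG0 in_set1 => /eqP <-; rewrite evK.
move/eqP; rewrite mulf_eq0 (negbTE (zS _ G0f)) /=; apply/negP.
by rewrite bdry_neq0 // !rkK G0f FG0 cF eqxx.
Qed.

Definition component i L F := [set X in faces i L | connect (upnb i L) F X].

Definition cofaces i L (C : {set {set V}}) :=
  [set S in faces i.+1 L | [exists X in C, X \subset S]].

Lemma cofaces_component i L F S X : S \in faces i.+1 L -> X \in faces i L ->
  X \subset S -> connect (upnb i L) F X -> S \in cofaces i L (component i L F).
Proof.
by move=> Sf Xf XS FX; rewrite inE Sf; apply/existsP; exists X; rewrite inE Xf FX XS.
Qed.

Lemma component_cofaces i L F S X : S \in cofaces i L (component i L F) ->
  X \in faces i L -> X \subset S -> X \in component i L F.
Proof.
rewrite inE => /andP [Sf /existsP [Y /andP [/setIdP [Yf FY] YS]]] Xf XS.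
by rewrite inE Xf (connect_trans FY) // (connect_upnb_sub Yf Xf Sf).
Qed.

Lemma restr_component_bdry i L F c b : down_closed L ->
  (restr c (cofaces i L (component i L F)) *m bdry R i.+1 L) 0 b =
  if ev b \in component i L F then (c *m bdry R i.+1 L) 0 b else 0.
Proof.
move=> dL; rewrite !mxE; case: ifP => bC.
  apply: eq_bigr => a _; rewrite mxE; case: ifP => // aT.
  have [-> |] := eqVneq (bdry R i.+1 L a b) 0; first by rewrite !mulr0.
  rewrite bdry_neq0 // => /and3P [af ba _]; move: bC; rewrite inE => /andP [bf Fb].
  by rewrite (cofaces_component af bf ba Fb) in aT.
apply: big1 => a _; rewrite mxE; case: ifP => aT; last by rewrite mul0r.
have [-> |] := eqVneq (bdry R i.+1 L a b) 0; first by rewrite mulr0.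
rewrite bdry_neq0 // => /and3P [af ba /eqP cb].
have bf : ev b \in faces i L.
  by rewrite facesE cb eqxx andbT (dL (ev a)) //; case/setIdP: af.
by rewrite (component_cofaces aT bf ba) in bC.
Qed.

Lemma basic_hole_path_connected r K : basic_hole R r.+1 K -> path_connected r K.
Proof.
move=> hK; have [[dK _] pK _ _] := hK; have [z zC zS] := basic_hole_full_cycle hK.
apply: connect_path_connected => F G Ff Gf.
set T := cofaces r K (component r K F).
have cT : (restr z T <= cycles R r.+1 K)%MS.
  case/cyclesP: zC => zch zb; apply/cyclesP; split; first exact: restr_chains.
  by apply/rowP => b; rewrite restr_component_bdry // zb !mxE if_same.
have [G1 G1f FG1] := pure_sub_top pK (setIdP Ff).1.
have [G2 G2f GG2] := pure_sub_top pK (setIdP Gf).1.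
have G1T : G1 \in T by apply: cofaces_component G1f Ff FG1 (connect0 _ _).
have : restr z T 0 (rk G2) != 0.
  apply: contra_neq (zS G1 G1f) => cG2.
  have := restrE z T G1; rewrite G1T (basic_hole_cycle_eq0 hK G2f cT cG2) mxE.
  by move=> <-.
rewrite restrE; case: ifP => [G2T _|]; last by rewrite eqxx.
by have := component_cofaces G2T Gf GG2; rewrite inE => /andP [].
Qed.

Lemma cycle_setD1_neq0 i K Fb d a b : down_closed K -> Fb \in faces i.+2 K ->
  d *m bdry R i.+1 K = 0 -> (forall m, d 0 m != 0 -> ev m \subset Fb) ->
  a \in Fb -> b \in Fb -> a != b ->
  d 0 (rk (Fb :\ a)) != 0 -> d 0 (rk (Fb :\ b)) != 0.
Proof.
move=> dK Fbf db supp aFb bFb ab da; apply/negP => /eqP db0.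
case/facesP: (Fbf) => FbK cFb.
have cFbx x : x \in Fb -> #|Fb :\ x| = i.+2 by move=> xFb; rewrite card_setD1 // cFb.
set H := Fb :\ a :\ b.
have cH : #|H| = i.+1 by rewrite card_setD1 ?cFbx // !inE eq_sym ab.
have Faf : Fb :\ a \in faces i.+1 K by rewrite facesE (dK Fb) ?subD1set ?cFbx //=.
have : \sum_m d 0 m * bdry R i.+1 K m (rk H) = 0.
  by move/rowP/(_ (rk H)): db; rewrite [LHS]mxE mxE.
rewrite (bigD1 (rk (Fb :\ a))) //= big1 ?addr0 => [|m ma]; last first.
  apply/eqP; apply: contraTT ma; rewrite mulf_eq0 negb_or bdry_neq0 // rkK negbK.
  case/andP => dm /and3P [mf Hm _].
  have cm : #|ev m|.+1 = #|Fb| by case/facesP: mf => _ ->.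
  have [em|em] := setD1_cover (supp m dm) cm Hm.
    by rewrite -(evK m) em.
  by move: dm; rewrite -(evK m) em db0 eqxx.
move/eqP; rewrite mulf_eq0 (negbTE da) /=; apply/negP.
by rewrite bdry_neq0 // !rkK Faf subD1set cH eqxx.
Qed.

Lemma coface_delete i K Fb F : F \in faces i K -> (2 <= degK K F)%N ->
  exists2 G, G \in faces i.+1 (K :\ Fb) & F \subset G.
Proof.
case/facesP => _ cF; rewrite /degK (cardsD1 Fb) => deg2.
have /card_gt0P [G] : (0 < #|[set G in K | (F \subset G) && (#|G| == #|F|.+1)] :\ Fb|)%N.
  by move: deg2; case: (_ \in _); rewrite ?add1n ?add0n // => /ltnW.
rewrite !inE cF => /and4P [GFb GK FG cG].
by exists G; rewrite // faces_delete !inE GFb GK cG.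
Qed.

Section DeletedTopFace.
Variables (r : nat) (K : {set {set V}}) (Fb F : {set V}) (z : 'rV[R]_n).
Hypotheses (hK : basic_hole R r.+2 K) (Fbf : Fb \in faces r.+2 K).
Hypotheses (zC : (z <= cycles R r.+2 K)%MS)
  (zS : forall S, S \in faces r.+2 K -> z 0 (rk S) != 0).
Hypothesis FL : F \in faces r.+1 (K :\ Fb).

Let C := component r.+1 (K :\ Fb) F.
Let T := cofaces r.+1 (K :\ Fb) C.
Let d := restr z T *m bdry R r.+2 K.

Lemma restr_top_delete : restr z T 0 (rk Fb) = 0.
Proof. by rewrite restrE inE faces_delete !inE eqxx. Qed.

Lemma delete_bdry_entry b :
  d 0 b = if ev b \in C then - (z 0 (rk Fb) * bdry R r.+2 K (rk Fb) b) else 0.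
Proof.
have [[dK _] pK _ _] := hK; have dL := down_closed_delete dK pK Fbf.
have := mulmx_bdry_delete r.+2 K Fb (restr z T) b.
rewrite restr_top_delete mul0r subr0 /d => <-; rewrite restr_component_bdry //.
case: ifP => // _; rewrite mulmx_bdry_delete; case/cyclesP: zC => _ ->.
by rewrite mxE sub0r.
Qed.

Lemma delete_bdry_cycle : d *m bdry R r.+1 K = 0.
Proof. by have [[dK _] _ _ _] := hK; rewrite /d -mulmxA mul_bdry_bdry // mulmx0. Qed.

Lemma delete_bdry_supp m : d 0 m != 0 -> ev m \subset Fb.
Proof.
rewrite delete_bdry_entry; case: ifP => _; last by rewrite eqxx.
by rewrite oppr_eq0 mulf_eq0 negb_or bdry_neq0 // rkK => /andP [_ /and3P []].
Qed.

Lemma delete_bdry_setD1 x : x \in Fb -> (d 0 (rk (Fb :\ x)) != 0) = (Fb :\ x \in C).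
Proof.
move=> xFb; rewrite delete_bdry_entry rkK; case: ifP => _; last by rewrite eqxx.
rewrite oppr_eq0 mulf_eq0 negb_or zS // bdry_neq0 // !rkK Fbf subD1set /=.
by move: Fbf; rewrite card_setD1 // facesE => /andP [_ /eqP ->]; rewrite eqxx.
Qed.

Lemma exists_setD1_component : exists2 a, a \in Fb & Fb :\ a \in C.
Proof.
have [/existsP [a /andP [aFb aC]]|none] := boolP [exists a, (a \in Fb) && (Fb :\ a \in C)].
  by exists a.
have d0 : d = 0.
  apply/rowP => b; rewrite [RHS]mxE delete_bdry_entry; case: ifP => // bC.
  have [-> |] := eqVneq (bdry R r.+2 K (rk Fb) b) 0; first by rewrite mulr0 oppr0.
  rewrite bdry_neq0 // rkK => /and3P [_ bFb /eqP cb].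
  have cbFb : #|ev b|.+1 = #|Fb| by case/facesP: Fbf => _ ->; rewrite cb.
  have [a aFb eb] := subset_cardS_setD1 bFb cbFb.
  by move/existsPn/(_ a): none; rewrite aFb -eb bC.
have r0 : restr z T = 0.
  apply: basic_hole_cycle_eq0 hK Fbf _ restr_top_delete; apply/cyclesP; split => //.
  by case/cyclesP: zC => /restr_chains.
have FK : F \in faces r.+1 K by move: FL; rewrite faces_delete => /setD1P [].
have [G Gf FG] := coface_delete Fb FK (basic_hole_degK hK FK).
have GT : G \in T by apply: cofaces_component Gf FL FG (connect0 _ _).
have := restrE z T G; rewrite GT r0 mxE => /esym/eqP.
by rewrite (negbTE (zS _)) //; move: Gf; rewrite faces_delete => /setD1P [].
Qed.

Lemma setD1_component x : x \in Fb -> Fb :\ x \in C.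
Proof.
move=> xFb; have [[dK _] _ _ _] := hK; have [a aFb aC] := exists_setD1_component.
have [-> //|xa] := eqVneq x a.
rewrite -delete_bdry_setD1 //; rewrite -delete_bdry_setD1 // in aC.
apply: (cycle_setD1_neq0 dK Fbf delete_bdry_cycle delete_bdry_supp aFb xFb) => //.
by rewrite eq_sym.
Qed.

End DeletedTopFace.

Lemma basic_hole_delete_path_connected r K Fb : basic_hole R r.+2 K ->
  Fb \in faces r.+2 K -> path_connected r.+1 (K :\ Fb).
Proof.
move=> hK Fbf; have [z zC zS] := basic_hole_full_cycle hK.
have /card_gt0P [a aFb] : (0 < #|Fb|)%N by case/facesP: Fbf => _ ->.
have to_Fba F : F \in faces r.+1 (K :\ Fb) -> connect (upnb r.+1 (K :\ Fb)) F (Fb :\ a).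
  by move=> Ff; have := setD1_component hK Fbf zC zS Ff aFb; case/setIdP.
apply: connect_path_connected => F G Ff Gf.
rewrite (connect_trans (to_Fba F Ff)) // (sym_connect_sym (@upnb_sym _ _)).
exact: to_Fba.
Qed.

End BasicHoles.

Theorem mainTheorem2 (R : realType) (V : finType) (r : nat) (K : {set {set V}}) :
  (2 <= r)%N -> basic_hole R r K ->
  [/\ path_connected r.-1 K,
      (forall F, F \in faces r.-1 K -> (2 <= degK K F)%N) &
      (forall Fb, Fb \in faces r K -> path_connected r.-1 (K :\ Fb))].
Proof.
case: r => [|[|r]] // _ hK; split.
- exact: basic_hole_path_connected hK.
- by move=> F; apply: basic_hole_degK hK.
- by move=> Fb; apply: basic_hole_delete_path_connected hK.
Qed.
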